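(* Let $G$ be a graph and let $P,Q$ be bicliques of $G$. If there is a biclique $R$ of $G$ that is mutually included with $P$ and mutually included with $Q$, then $P\cap Q\neq\emptyset$.
   Context: All graphs are finite and simple. A biclique of a graph $G$ is a set $P\subseteq V(G)$ such that the induced subgraph $G[P]$ is a complete bipartite graph with both parts nonempty, and $P$ is inclusion-maximal with this property. Since $G[P]$ is connected, its bipartition into two nonempty independent sets $X,Y$ (every vertex of $X$ adjacent to every vertex of $Y$) is unique; we write $P=XY$ to mean $P=X\cup Y$ with $X,Y$ these two parts, called the sides of $P$. Two bicliques $P,Q$ of $G$ are mutually included if their sides can be named $P=X_PY_P$, $Q=X_QY_Q$ so that $X_Q\subsetneq X_P$ and $Y_P\subsetneq Y_Q$. *)

From mathcomp Require Import all_boot.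
Set Implicit Arguments. Unset Strict Implicit. Unset Printing Implicit Defensive.

Definition simple_graph (T : finType) (e : rel T) : Prop :=
  symmetric e /\ irreflexive e.

Definition independent (T : finType) (e : rel T) (X : {set T}) : Prop :=
  forall x y, x \in X -> y \in X -> ~~ e x y.

(* X, Y are the two sides of an induced complete bipartite subgraph on
   X :|: Y : both nonempty, disjoint, independent, fully joined. *)
Definition cbip_sides (T : finType) (e : rel T) (X Y : {set T}) : Prop :=
  [/\ X != set0, Y != set0, [disjoint X & Y],
      independent e X /\ independent e Y &
      forall x y, x \in X -> y \in Y -> e x y].

Definition complete_bip (T : finType) (e : rel T) (P : {set T}) : Prop :=
  exists X Y : {set T}, P = X :|: Y /\ cbip_sides e X Y.

Definition biclique (T : finType) (e : rel T) (P : {set T}) : Prop :=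
  complete_bip e P /\
  forall P' : {set T}, P \subset P' -> complete_bip e P' -> P' = P.

Definition mutually_included (T : finType) (e : rel T) (P Q : {set T}) : Prop :=
  exists XP YP XQ YQ : {set T},
    [/\ P = XP :|: YP /\ cbip_sides e XP YP,
        Q = XQ :|: YQ /\ cbip_sides e XQ YQ,
        XQ \proper XP & YP \proper YQ].

From mathcomp Require Import all_boot.

Set Implicit Arguments.
Unset Strict Implicit.
Unset Printing Implicit Defensive.

(* The key fact is that the bipartition of a complete bipartite set is
   unique up to swapping the sides (lemma cbip_sides_unique): if the first
   sides of two bipartitions of the same set share a vertex x, then every
   vertex on a second side is a neighbour of x, hence lies on the second
   side of the other bipartition too, so the bipartitions coincide.

   Write R = X Y with X_P < X and Y < Y_P (from R, P mutually included) and
   R = X' Y' with X_Q < X' and Y' < Y_Q (from R, Q).  By uniqueness either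
   Y = Y', so the nonempty set Y lies in Y_P and Y_Q, or X = Y', so the
   nonempty set X_P lies in X = Y' < Y_Q.  Either way a nonempty set is
   contained in both P and Q. *)

Lemma setI_neq0_sub (T : finType) (S A B : {set T}) :
  S != set0 -> S \subset A -> S \subset B -> A :&: B != set0.
Proof.
move=> S0 SA SB; apply: contraNneq S0 => AB0.
by rewrite -subset0 -AB0 subsetI SA SB.
Qed.

Section Bipartitions.

Variables (T : finType) (e : rel T).
Hypothesis e_sym : symmetric e.

Lemma cbip_sidesC (X Y : {set T}) : cbip_sides e X Y -> cbip_sides e Y X.
Proof.
case=> X0 Y0 dXY [iX iY] eXY; split=> //; first by rewrite disjoint_sym.
by move=> y x yY xX; rewrite e_sym eXY.
Qed.

(* Bipartitions of one set whose first sides meet share their second side: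
   a neighbour of the common vertex x cannot lie on x's side. *)
Lemma cbip_sides_meet (X Y X' Y' : {set T}) (x : T) :
  cbip_sides e X Y -> cbip_sides e X' Y' -> X :|: Y = X' :|: Y' ->
  x \in X -> x \in X' -> Y = Y'.
Proof.
case=> _ _ _ [iX _] eXY [_ _ _ [iX' _] eXY'] XY xX xX'.
apply/setP=> y; apply/idP/idP => yS.
- have yR : y \in X' :|: Y' by rewrite -XY inE yS orbT.
  move: yR; rewrite inE => /orP[yX'|//].
  by move: (iX' _ _ xX' yX'); rewrite eXY.
- have yR : y \in X :|: Y by rewrite XY inE yS orbT.
  move: yR; rewrite inE => /orP[yX|//].
  by move: (iX _ _ xX yX); rewrite eXY'.
Qed.

Lemma cbip_sides_first (X Y : {set T}) : cbip_sides e X Y -> X = (X :|: Y) :\: Y.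
Proof. by case=> _ _ dXY _ _; rewrite setDUl setDv setU0; apply/esym/setDidPl. Qed.

Lemma cbip_sides_unique (X Y X' Y' : {set T}) :
  cbip_sides e X Y -> cbip_sides e X' Y' -> X :|: Y = X' :|: Y' ->
  (X = X' /\ Y = Y') \/ (X = Y' /\ Y = X').
Proof.
move=> sXY sXY' XY; have [X0 _ _ _ _] := sXY; have [x xX] := set0Pn _ X0.
have : x \in X' :|: Y' by rewrite -XY inE xX.
rewrite inE => /orP[xX' | xY'].
- have YY' := cbip_sides_meet sXY sXY' XY xX xX'.
  by left; rewrite (cbip_sides_first sXY) (cbip_sides_first sXY') XY YY'.
- have sYX' := cbip_sidesC sXY'.
  have YX' := cbip_sides_meet sXY sYX' (etrans XY (setUC _ _)) xX xY'.
  right; split=> //.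
  by rewrite (cbip_sides_first sXY) (cbip_sides_first sYX') XY setUC YX'.
Qed.

End Bipartitions.

Theorem lemma2 (T : finType) (e : rel T) (P Q : {set T}) :
  simple_graph e -> biclique e P -> biclique e Q ->
  (exists R : {set T}, biclique e R /\
     mutually_included e R P /\ mutually_included e R Q) ->
  P :&: Q != set0.
Proof.
move=> [e_sym _] _ _ [R [_ [mRP mRQ]]].
have [X [Y [XP [YP [[RXY sXY] [PXY sXYP] /proper_sub XPX /proper_sub YYP]]]]] := mRP.
have [X' [Y' [XQ [YQ [[RXY' sXY'] [QXY _] _ /proper_sub Y'YQ]]]]] := mRQ.
have [[_ YY'] | [XY' _]] := cbip_sides_unique e_sym sXY sXY' (etrans (esym RXY) RXY').
- (* Same orientation: the nonempty side Y lies in Y_P and in Y_Q. *)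
  case: sXY => _ Y0 _ _ _; apply: (setI_neq0_sub Y0).
  + by rewrite PXY (subset_trans YYP) ?subsetUr.
  + by rewrite QXY YY' (subset_trans Y'YQ) ?subsetUr.
- (* Swapped orientation: the nonempty side X_P lies in X = Y', hence in Y_Q. *)
  case: sXYP => XP0 _ _ _ _; apply: (setI_neq0_sub XP0).
  + by rewrite PXY subsetUl.
  + by rewrite QXY (subset_trans XPX) // XY' (subset_trans Y'YQ) ?subsetUr.
Qed.
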